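(* For every integer $t\geq 2$ there exist a connected graph $G$ and a function $g:A\to B$ such that $fix(G)=t=fix(F_G)$.
   Context: A set $S\subseteq V(H)$ is a fixing set of a graph $H$ if the only automorphism of $H$ fixing every vertex of $S$ is the identity; $fix(H)$ is the minimum cardinality of a fixing set of $H$. Functigraph: let $G_1,G_2$ be disjoint copies of a connected graph $G$, with $A=V(G_1)$, $B=V(G_2)$, and let $g:A\to B$ be a function. The functigraph $F_G$ has vertex set $A\cup B$ and edge set $E(G_1)\cup E(G_2)\cup\{ug(u):u\in A\}$. *)

From HB Require Import structures.
From mathcomp Require Import all_boot all_fingroup.
Set Implicit Arguments. Unset Strict Implicit. Unset Printing Implicit Defensive.

Section Graphs.
Variable T : finType.

Definition simple_graph (e : rel T) : Prop := symmetric e /\ irreflexive e.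

Definition connected (e : rel T) : Prop := forall x y : T, connect e x y.

Definition is_aut (e : rel T) (s : {perm T}) : bool :=
  [forall x, forall y, e (s x) (s y) == e x y].

Definition fixing_set (e : rel T) (S : {set T}) : bool :=
  [forall s : {perm T}, (is_aut e s && [forall x in S, s x == x]) ==> (s == 1%g)].

Lemma fixing_setT (e : rel T) : exists k, [exists S : {set T}, (#|S| == k) && fixing_set e S].
Proof.
exists #|[set: T]|; apply/existsP; exists [set: T]; rewrite eqxx /=.
apply/forallP => s; apply/implyP => /andP [_ /forallP Hs].
apply/eqP/permP => x; rewrite perm1; apply/eqP.
by have := Hs x; rewrite in_setT.
Qed.

Definition fix_number (e : rel T) : nat := ex_minn (fixing_setT e).

End Graphs.

(* The functigraph F_G on A + B (A = inl-copy G_1, B = inr-copy G_2) of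
   the graph e on T and the function g : A -> B (given as g : T -> T,
   g u being the copy in G_2 of the indicated vertex). *)
Definition functigraph (T : finType) (e : rel T) (g : T -> T) : rel (T + T) :=
  fun x y =>
    match x, y with
    | inl u, inl v => e u v
    | inr u, inr v => e u v
    | inl u, inr w => g u == w
    | inr w, inl u => g u == w
    end.

(* The witness is the complete graph K_(t+1) with g the identity, so that F_G
   is the prism K_(t+1) x K_2. Any two vertices of K_n, or any two "rungs"
   {u, u'} of the prism, can be swapped by an automorphism, so a fixing set
   must meet all but at most one vertex (resp. rung): fix >= n - 1. Conversely
   n - 1 vertices of K_n fix it, and n - 1 >= 2 vertices of the first copy
   fix the prism: the remaining vertex of that copy is their only common
   neighbour outside the second copy, and each vertex of the second copy is
   then pinned down by its unique neighbour in the first. *)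

From mathcomp Require Import all_boot all_fingroup zify.
Set Implicit Arguments. Unset Strict Implicit. Unset Printing Implicit Defensive.

Section FixingSets.
Variables (T : finType) (e : rel T).

Lemma is_autP (s : {perm T}) :
  reflect (forall x y, e (s x) (s y) = e x y) (is_aut e s).
Proof.
apply: (iffP forallP) => [aut x y | aut x]; last by apply/forallP => y; rewrite aut.
by apply/eqP; have /forallP := aut x.
Qed.

Lemma fixing_setP (S : {set T}) :
  reflect (forall s : {perm T}, is_aut e s -> {in S, forall x, s x = x} -> s = 1%g)
          (fixing_set e S).
Proof.
apply: (iffP forallP) => [fixS s aut sS | fixS s].
  apply/eqP; have /implyP -> // := fixS s.
  by rewrite aut; apply/forall_inP => x /sS ->.
apply/implyP => /andP [aut /forall_inP sS].
by rewrite (fixS s aut) // => x /sS /eqP.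
Qed.

Lemma fix_number_eq k :
  (exists S : {set T}, #|S| = k /\ fixing_set e S) ->
  (forall S : {set T}, fixing_set e S -> k <= #|S|) -> fix_number e = k.
Proof.
move=> [S0 [cardS0 fixS0]] lb; rewrite /fix_number.
case: ex_minnP => m /existsP [S /andP [/eqP <- fixS]] minS.
apply/eqP; rewrite eqn_leq lb // andbT -cardS0 minS //.
by apply/existsP; exists S0; rewrite cardS0 eqxx.
Qed.

(* If [S] missed two fibres of [f], the automorphism exchanging them would
   fix [S] pointwise. *)
Lemma fixing_set_card_ge (U : finType) (f : T -> U) :
  (forall x y : U, x != y -> exists2 s : {perm T}, is_aut e s &
     s != 1%g /\ forall z, f z != x -> f z != y -> s z = z) ->
  forall S : {set T}, fixing_set e S -> #|U|.-1 <= #|S|.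
Proof.
move=> swap S /fixing_setP fixS; rewrite leqNgt; apply/negP => smallS.
have : 1 < #|~: (f @: S)|.
  by rewrite cardsCs setCK; have := leq_imset_card f S; lia.
case/card_gt1P => x [y [xS yS xy]].
have [s aut [s_nontriv s_fix]] := swap x y xy.
apply: (negP s_nontriv); apply/eqP; apply: fixS => // z zS.
have fzS : f z \in f @: S by exact: imset_f.
rewrite !inE in xS yS.
by apply: s_fix; [apply: contraNneq xS | apply: contraNneq yS] => <-.
Qed.

End FixingSets.

Section CompleteGraph.
Variable T : finType.

Definition complete : rel T := fun x y => x != y.

Lemma complete_simple : simple_graph complete.
Proof. by split=> [x y | x]; rewrite /complete (eq_sym, eqxx). Qed.

Lemma complete_connected : connected complete.
Proof.
move=> x y; have [-> | xy] := eqVneq x y; first exact: connect0.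
exact: connect1.
Qed.

Lemma complete_aut (s : {perm T}) : is_aut complete s.
Proof. by apply/is_autP => x y; rewrite /complete (inj_eq perm_inj). Qed.

Lemma perm_fix_all_but_one (s : {perm T}) x0 :
  (forall x, x != x0 -> s x = x) -> s = 1%g.
Proof.
move=> fix_s; apply/permP => x; rewrite perm1.
have [-> | /fix_s //] := eqVneq x x0.
have [// | sx0] := eqVneq (s x0) x0.
by have /perm_inj sx0x0 := fix_s _ sx0; rewrite sx0x0 eqxx in sx0.
Qed.

Lemma fix_number_complete (x0 : T) : fix_number complete = #|T|.-1.
Proof.
apply: fix_number_eq.
  exists [set~ x0]; split; first exact: cardsC1.
  apply/fixing_setP => s _ fix_s; apply: (perm_fix_all_but_one (x0 := x0)) => x x_x0.
  by apply: fix_s; rewrite !inE.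
apply: (fixing_set_card_ge (f := id)) => x y xy.
exists (tperm x y); first exact: complete_aut.
split=> [|z zx zy]; last by rewrite tpermD // eq_sym.
by apply/eqP => /permP /(_ x) /eqP; rewrite tpermL perm1 eq_sym (negbTE xy).
Qed.

End CompleteGraph.

Section Functigraph.
Variables (T : finType) (e : rel T).

Definition sum_lift (p : {perm T}) (z : T + T) : T + T :=
  match z with inl u => inl (p u) | inr u => inr (p u) end.

Lemma sum_lift_inj p : injective (sum_lift p).
Proof. by case=> [u|u] [v|v] //= [] /perm_inj ->. Qed.

Definition sum_perm p : {perm T + T} := perm (@sum_lift_inj p).

Lemma sum_perm_aut p : is_aut e p -> is_aut (functigraph e id) (sum_perm p).
Proof.
move/is_autP => aut; apply/is_autP => a b; rewrite !permE.
by case: a => [u|u]; case: b => [v|v]; rewrite /= ?aut ?(inj_eq perm_inj).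
Qed.

Lemma sum_perm_eq1 p : (sum_perm p == 1%g) = (p == 1%g).
Proof.
apply/eqP/eqP => [/permP p1 | ->]; apply/permP => u.
  by have := p1 (inl u); rewrite permE !perm1 => -[].
by rewrite permE perm1; case: u => v /=; rewrite perm1.
Qed.

Section InjectiveG.
Variables (g : T -> T) (g_inj : injective g).
Local Notation F := (functigraph e g).

Lemma functigraph_common_nbr_inl z u1 u2 :
  u1 != u2 -> F z (inl u1) -> F z (inl u2) -> exists v, z = inl v.
Proof.
case: z => [v | w] u12 /=; first by exists v.
by move=> /eqP gu1 /eqP gu2; rewrite -(g_inj (etrans gu1 (esym gu2))) eqxx in u12.
Qed.

(* Each [inr w] is the unique neighbour of [inl (g^-1 w)] in the second copy. *)
Lemma functigraph_aut_fix_inl (s : {perm T + T}) :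
  is_aut F s -> (forall u, s (inl u) = inl u) -> s = 1%g.
Proof.
move/is_autP => aut fix_inl; apply/permP => -[u | w]; rewrite perm1 //.
have [u ->] := codomP (injF_onto g_inj w).
case sw: (s (inr (g u))) => [v | w'].
  by have := fix_inl v; rewrite -sw => /perm_inj.
have /eqP <- // : g u == w'.
by have := aut (inl u) (inr (g u)); rewrite fix_inl sw /= eqxx.
Qed.

End InjectiveG.
End Functigraph.

Section Prism.
Variables (T : finType) (x0 : T).
Hypothesis T_gt2 : 2 < #|T|.
Local Notation F := (functigraph (@complete T) id).

Lemma fixing_set_prism : fixing_set F (inl @: [set~ x0]).
Proof.
apply/fixing_setP => s autF fixS.
have fix_inl u : u != x0 -> s (inl u) = inl u.
  by move=> u_x0; apply: fixS; apply: imset_f; rewrite !inE.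
have : 1 < #|[set~ x0]| by rewrite cardsC1; case: #|T| T_gt2.
case/card_gt1P => u1 [u2 []]; rewrite !inE => u1_x0 u2_x0 u12.
have nbr u : u != x0 -> F (s (inl x0)) (inl u).
  move=> u_x0; rewrite -(fix_inl u u_x0).
  by move/is_autP: autF => ->; rewrite /= /complete eq_sym.
have [v sx0] := functigraph_common_nbr_inl (@inj_id T) u12 (nbr _ u1_x0) (nbr _ u2_x0).
have v_x0 : v = x0.
  apply/eqP; apply: contraT => v_x0.
  by have := fix_inl _ v_x0; rewrite -{2}sx0 => /perm_inj [] vx; rewrite vx eqxx in v_x0.
apply: (functigraph_aut_fix_inl (@inj_id T) autF) => u.
by have [-> | /fix_inl] := eqVneq u x0; rewrite ?sx0 ?v_x0.
Qed.

Lemma fix_number_prism : fix_number F = #|T|.-1.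
Proof.
apply: fix_number_eq.
  exists (inl @: [set~ x0]); split; last exact: fixing_set_prism.
  by rewrite card_imset ?cardsC1 // => u v [].
pose rung (z : T + T) := match z with inl u | inr u => u end.
apply: (fixing_set_card_ge (f := rung)) => x y xy.
exists (sum_perm (tperm x y)); first exact/sum_perm_aut/complete_aut.
split=> [|z zx zy]; last by rewrite permE; case: z zx zy => u ux uy /=; rewrite tpermD // eq_sym.
rewrite sum_perm_eq1; apply/eqP => /permP /(_ x) /eqP.
by rewrite tpermL perm1 eq_sym (negbTE xy).
Qed.

End Prism.

Theorem lemma2p6 (t : nat) (ht : 2 <= t) :
  exists (n : nat) (e : rel 'I_n) (g : 'I_n -> 'I_n),
    simple_graph e /\ connected e /\
    fix_number e = t /\ fix_number (functigraph e g) = t.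
Proof.
exists t.+1, (@complete _), id.
split; first exact: complete_simple.
split; first exact: complete_connected.
split; first by rewrite (fix_number_complete ord0) card_ord.
by rewrite (fix_number_prism ord0) card_ord.
Qed.
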